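(* Let $M=(S,s_0,\mathbf{P})$ be a DTMC satisfying the standing assumptions below, let $p\in(0,1]$, and let \[\Theta=\{s_0s_1\cdots s_n\in \operatorname{Paths}_{\operatorname{fin}}(M)\mid s_n\in S_p \text{ and } s_i\notin S_p \text{ for all } i<n\}.\] Then $\Theta$ is a $p$-cause for $\lozenge \mathit{error}$ in $M$, $\Theta$ is a regular language (of finite words over the alphabet $S$), and $\Theta\preceq\Pi$ for every $p$-cause $\Pi$ for $\lozenge\mathit{error}$ in $M$.
   Context: A DTMC $M=(S,s_0,\mathbf{P})$ has a finite state set $S$, initial state $s_0\in S$, and transition function $\mathbf{P}\colon S\times S\to[0,1]$ with $\sum_{s'}\mathbf{P}(s,s')=1$ for all $s$. A finite path is a sequence $s_0s_1\cdots s_n$ starting in the initial state with $\mathbf{P}(s_i,s_{i+1})>0$ for all $i$; infinite paths are defined analogously; $\operatorname{Paths}_{\operatorname{fin}}(M)$ and $\operatorname{Paths}(M)$ denote these sets, $\operatorname{Pref}(\pi)$ the set of finite prefixes of a path $\pi$, and $\operatorname{last}(s_0\cdots s_n)=s_n$. The probability measure on infinite paths is the standard one generated by cylinder sets, with $\Pr(\operatorname{Cyl}(s_0\cdots s_n))=\prod_i\mathbf{P}(s_i,s_{i+1})$. $\Pr_s(\lozenge X)$ denotes the probability of eventually reaching the set $X$ when starting in state $s$. Standing assumptions: every state is reached from $s_0$ with positive probability; there are distinguished states $\mathit{error},\mathit{safe}\in S$ such that $\mathit{safe}$ is the (unique) state from which $\mathit{error}$ is not reachable, so $\Pr_{\mathit{safe}}(\lozenge\mathit{error})=0$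 and $\Pr_{s_0}(\lozenge\{\mathit{error},\mathit{safe}\})=1$. For $p\in(0,1]$ let $S_p=\{s\in S\mid \Pr_s(\lozenge\mathit{error})\ge p\}$. A finite path $\hat\pi$ is a $p$-critical prefix if $\Pr_{\operatorname{last}(\hat\pi)}(\lozenge\mathit{error})\ge p$ (this equals the conditional probability of $\lozenge\mathit{error}$ given the cylinder of $\hat\pi$). A set $\Pi$ of finite paths is prefix-free if for each $\hat\pi\in\Pi$ the only prefix of $\hat\pi$ in $\Pi$ is $\hat\pi$ itself. A $p$-cause for $\lozenge\mathit{error}$ in $M$ is a prefix-free set $\Pi\subseteq\operatorname{Paths}_{\operatorname{fin}}(M)$ such that (1) almost every infinite path that visits $\mathit{error}$ has a prefix in $\Pi$, and (2) every element of $\Pi$ is a $p$-critical prefix. For $p$-causes $\Pi,\Phi$ write $\Pi\preceq\Phi$ iff for every $\phi\in\Phi$ there is $\pi\in\Pi$ with $\pi\in\operatorname{Pref}(\phi)$. *)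

From HB Require Import structures.
From mathcomp Require Import all_boot all_order all_algebra.
From mathcomp Require Import classical_sets reals.
Set Implicit Arguments. Unset Strict Implicit. Unset Printing Implicit Defensive.
Import Order.TTheory GRing.Theory Num.Theory.
Local Open Scope ring_scope.

Section DTMC.
Variables (R : realType) (S : finType) (s0 : S) (P : S -> S -> R).

Definition edge : rel S := fun a b => 0 < P a b.

Definition is_fpath (w : seq S) : Prop :=
  match w with [::] => False | s :: t => s = s0 /\ path edge s t end.

Definition is_ipath (pi : nat -> S) : Prop :=
  pi 0%N = s0 /\ forall i, edge (pi i) (pi i.+1).

Fixpoint seqprob (s : S) (t : seq S) : R :=
  match t with [::] => 1 | x :: t' => P s x * seqprob x t' end.

Definition cylprob (w : seq S) : R :=
  match w with [::] => 1 | s :: t => seqprob s t end.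

Definition firsthit (X : pred S) (s : S) (t : seq S) : bool :=
  (last s t \in X) && all (fun x => x \notin X) (belast s t).

Definition reach_upto (X : pred S) (s : S) (n : nat) : R :=
  \sum_(k < n) \sum_(t : k.-tuple S)
     (if firsthit X s t then seqprob s t else 0).

(* Pr_s(<> X): measure of the (disjoint) union of the cylinders of the
   minimal finite paths from s reaching X *)
Definition reachprob (s : S) (X : pred S) : R :=
  sup (range (reach_upto X s)).

Definition ipref (pi : nat -> S) (n : nat) : seq S := mkseq pi n.

(* A set of infinite paths is null for the cylinder-generated measure:
   it can be covered by countably many cylinders of arbitrarily small
   total probability (outer measure 0). *)
Definition null_set (A : (nat -> S) -> Prop) : Prop :=
  forall eps : R, 0 < eps ->
    exists c : nat -> seq S,
      (forall pi, A pi -> exists n, ipref pi (size (c n)) = c n) /\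
      (forall N, \sum_(n < N) cylprob (c n) <= eps).

Definition prefix_free (Pi : seq S -> Prop) : Prop :=
  forall w v, Pi w -> Pi v -> prefix v w -> v = w.

Section Cause.
Variables (error : S) (p : R).

Definition Sp : pred S := fun s => p <= reachprob s (pred1 error).

Definition p_critical (w : seq S) : Prop :=
  is_fpath w /\ p <= reachprob (last s0 w) (pred1 error).

Definition p_cause (Pi : seq S -> Prop) : Prop :=
  (forall w, Pi w -> is_fpath w) /\
  prefix_free Pi /\
  null_set (fun pi => is_ipath pi /\ (exists i, pi i = error) /\
                      ~ (exists n, Pi (ipref pi n))) /\
  (forall w, Pi w -> p_critical w).

Definition Theta (w : seq S) : Prop :=
  is_fpath w /\
  match w with
  | [::] => False
  | s :: t => Sp (last s t) /\ (forall x, x \in belast s t -> ~~ Sp x)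
  end.

End Cause.

Definition cause_le (Pi Phi : seq S -> Prop) : Prop :=
  forall phi, Phi phi -> exists2 pi, Pi pi & prefix pi phi.

End DTMC.

Definition regular (A : finType) (L : seq A -> Prop) : Prop :=
  exists (Q : finType) (q0 : Q) (delta : Q -> A -> Q) (F : pred Q),
    forall w, L w <-> F (foldl delta q0 w).

From HB Require Import structures.
From mathcomp Require Import all_boot all_order all_algebra.
From mathcomp Require Import classical_sets reals.
Set Implicit Arguments. Unset Strict Implicit. Unset Printing Implicit Defensive.
Import Order.TTheory GRing.Theory Num.Theory.
Local Open Scope ring_scope.

(* Since error reaches itself with probability 1 >= p, error lies in S_p, so
   every path visiting error visits S_p, and its shortest prefix ending in S_p
   belongs to Theta: the set of error paths without a Theta-prefix is empty.
   For the same reason every p-critical prefix, ending in S_p, has a prefix in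
   Theta, which gives minimality. Theta is prefix-free because its words enter
   S_p only at their last state, and it is recognised by the automaton that
   remembers the last state read and whether the word so far is a path
   avoiding S_p. *)

Lemma first_hit (T : eqType) (Q : pred T) (s : T) (t : seq T) : has Q (s :: t) ->
  exists2 t', prefix t' t & Q (last s t') && all (predC Q) (belast s t').
Proof.
elim: t s => [|x t IH] s /=.
  by rewrite orbF => Qs; exists [::]; rewrite /= ?Qs.
case Qs: (Q s) => /= hasQ.
  by exists [::]; rewrite ?prefix0s //= Qs.
have [t' t't /andP[Qlast avoid]] := IH x hasQ.
by exists (x :: t'); rewrite /= ?eqxx ?Qlast ?Qs.
Qed.

Lemma mkseqSl (T : Type) (f : nat -> T) n :
  mkseq f n.+1 = f 0%N :: mkseq (fun k => f k.+1) n.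
Proof. by rewrite /mkseq /= -[1%N]addn0 iotaDl -map_comp. Qed.

Lemma ipref_prefix (T : finType) (pi : nat -> T) n v :
  prefix v (ipref pi n) -> ipref pi (size v) = v.
Proof.
move=> vpi; have := size_prefix vpi; rewrite size_mkseq => le_vn.
move: vpi; rewrite prefixE => /eqP take_v.
by rewrite -[in RHS]take_v /ipref /mkseq -map_take take_iota (minn_idPl le_vn).
Qed.

Section Reachability.
Variables (R : realType) (S : finType) (s0 : S) (P : S -> S -> R).

Lemma reach_upto_self (e : S) n : reach_upto P (pred1 e) e n = (0 < n)%:R.
Proof.
case: n => [|n]; first by rewrite /reach_upto big_ord0.
rewrite /reach_upto big_ord_recl /= [X in _ + X]big1 ?addr0; last first.
  move=> i _; apply: big1 => -[[|x t] /= _] //.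
  by rewrite /firsthit /= !inE eqxx /= andbF.
rewrite (big_pred1 [tuple]) ?/firsthit /= ?inE ?eqxx //.
by move=> t; rewrite /= (tuple0 t); apply/esym/eqP.
Qed.

Lemma reachprob_self (e : S) : reachprob P e (pred1 e) = 1.
Proof.
have range01 : range (reach_upto P (pred1 e) e) = [set x : R | x = 0 \/ x = 1]%classic.
  apply/seteqP; split => x /=.
    by case=> n _ <-; rewrite reach_upto_self; case: n => [|n]; [left|right].
  by case=> ->; [exists 0%N | exists 1%N]; rewrite // reach_upto_self.
have ub1 : forall x : R, (x = 0 \/ x = 1) -> x <= 1 by move=> x [->|->]; rewrite ?ler01.
rewrite /reachprob range01; apply/eqP; rewrite eq_le; apply/andP; split.
  by apply: ge_sup; [exists 1; right | exact: ub1].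
by apply: sup_upper_bound; [split; [exists 1; right | exists 1; exact: ub1] | right].
Qed.

Lemma ipref_fpath pi n : is_ipath s0 P pi -> is_fpath s0 P (ipref pi n.+1).
Proof.
case=> pi0 pi_edge; rewrite /ipref mkseqSl /=; split => //.
apply/(pathP s0) => i; rewrite size_mkseq => lt_in.
rewrite nth_mkseq //; case: i lt_in => [|i] lt_in /=; first exact: pi_edge.
by rewrite nth_mkseq 1?ltnW //; exact: pi_edge.
Qed.

Lemma unreachable_prob0 a b : (forall s t, 0 <= P s t) ->
  ~~ connect (edge P) a b -> P a b = 0.
Proof.
move=> P_ge0 /negP unreach; apply/eqP; rewrite eq_le P_ge0 andbT leNgt.
by apply/negP => /(@connect1 _ (edge P)).
Qed.

Lemma null_set_empty (A : (nat -> S) -> Prop) w :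
  cylprob P w = 0 -> (forall pi, ~ A pi) -> null_set P A.
Proof.
move=> w0 noA eps eps_gt0; exists (fun=> w); split.
  by move=> pi /noA.
by move=> N; rewrite big1 ?ltW.
Qed.

Section FirstHitAutomaton.
Variable Q : pred S.

(* A state [Some (x, ok)] records the last letter [x] read and whether the
   word read so far is a finite path that avoids [Q] before [x]. *)
Definition first_hit_step (q : option (S * bool)) (b : S) : option (S * bool) :=
  match q with
  | None => Some (b, b == s0)
  | Some (x, ok) => Some (b, [&& ok, edge P x b & ~~ Q x])
  end.

Lemma foldl_first_hit_step t x ok : foldl first_hit_step (Some (x, ok)) t =
  Some (last x t, [&& ok, path (edge P) x t & all (predC Q) (belast x t)]).
Proof.
elim: t x ok => [|y t IH] x ok /=; first by rewrite !andbT.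
rewrite IH; congr (Some (_, _)).
by case: ok; case: (edge P x y); case: (Q x); rewrite /= ?andbF.
Qed.

End FirstHitAutomaton.
End Reachability.

Section Theta.
Variables (R : realType) (S : finType) (s0 : S) (P : S -> S -> R).
Variables (error : S) (p : R).

Local Notation Sp := (Sp P error p).
Local Notation Theta := (Theta s0 P error p).

Lemma Theta_prefix_free : prefix_free Theta.
Proof.
move=> [|s t] [|s' t'] [_ w_Theta] [_ v_Theta] //.
rewrite prefix_cons => /andP[/eqP eq_s /prefixP[r t_eq]]; subst s' t.
case: r w_Theta => [|y r] [_ t_avoid]; first by rewrite cats0.
have := t_avoid (last s t'); rewrite belast_cat mem_cat /= in_cons eqxx orbT.
by case: v_Theta => -> _ /(_ isT).
Qed.

Lemma Theta_critical w : Theta w -> p_critical s0 P error p w.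
Proof. by case: w => [|s t] [w_fpath] // [Sp_last _]. Qed.

Lemma Theta_prefix_of_fpath w : is_fpath s0 P w -> has Sp w ->
  exists2 v, Theta v & prefix v w.
Proof.
case: w => [|s t] //= [-> st_path] hasSp.
have [t' /prefixP[r t_eq] /andP[Sp_last avoid]] := first_hit hasSp.
exists (s0 :: t'); last by rewrite /= eqxx t_eq prefix_prefix.
split; first by split=> //; move: st_path; rewrite t_eq cat_path => /andP[].
by split=> // x /(allP avoid).
Qed.

Lemma error_Sp : p <= 1 -> Sp error.
Proof. by rewrite /Sp reachprob_self. Qed.

Lemma Theta_prefix_of_error_path pi i : p <= 1 ->
  is_ipath s0 P pi -> pi i = error -> exists n, Theta (ipref pi n).
Proof.
move=> p_le1 pi_path pi_error.
have error_in : error \in ipref pi i.+1.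
  by rewrite -pi_error /ipref mkseqS mem_rcons mem_head.
have hasSp : has Sp (ipref pi i.+1) by apply/hasP; exists error => //; exact: error_Sp.
have [v Theta_v v_pref] := Theta_prefix_of_fpath (ipref_fpath i pi_path) hasSp.
by exists (size v); rewrite (ipref_prefix v_pref).
Qed.

Lemma Theta_p_cause (safe : S) : (forall s t, 0 <= P s t) ->
  ~~ connect (edge P) safe error -> p <= 1 -> p_cause s0 P error p Theta.
Proof.
move=> P_ge0 safe_error p_le1; split; [by move=> w [] | split].
  exact: Theta_prefix_free.
split; last exact: Theta_critical.
apply: (@null_set_empty _ _ P _ [:: safe; error]).
  by rewrite /= (unreachable_prob0 P_ge0 safe_error) mul0r.
move=> pi [pi_path [[i pi_error] no_Theta]]; apply: no_Theta.
exact: Theta_prefix_of_error_path pi_error.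
Qed.

Lemma Theta_regular : regular Theta.
Proof.
exists (option (S * bool)), None, (first_hit_step s0 P Sp),
  (fun q => if q is Some (x, ok) then ok && Sp x else false).
case=> [|s t] /=; first by split=> // -[].
rewrite foldl_first_hit_step; split.
  move=> [[-> st_path] [Sp_last avoid]].
  by rewrite eqxx st_path Sp_last andbT /=; apply/allP.
by case/andP=> /and3P[/eqP -> st_path /allP avoid] Sp_last.
Qed.

Lemma Theta_minimal Pi : p_cause s0 P error p Pi -> cause_le Theta Pi.
Proof.
move=> [_ [_ [_ Pi_critical]]] [|s t] /Pi_critical [w_fpath Sp_last] //.
apply: Theta_prefix_of_fpath => //; apply/hasP.
by exists (last s t); [exact: mem_last | exact: Sp_last].
Qed.

End Theta.

Theorem proposition1 (R : realType) (S : finType) (s0 : S) (P : S -> S -> R)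
  (error safe : S)
  (hP0 : forall s t, 0 <= P s t)
  (hP1 : forall s, \sum_(t : S) P s t = 1)
  (hreach : forall s, 0 < reachprob P s (pred1 s))
  (hsafe : forall s, (~~ connect (edge P) s error) = (s == safe))
  (hend : reachprob P s0 (fun s => (s == error) || (s == safe)) = 1)
  (p : R) (hp : 0 < p <= 1) :
  p_cause s0 P error p (Theta s0 P error p) /\
  regular (Theta s0 P error p) /\
  (forall Pi, p_cause s0 P error p Pi -> cause_le (Theta s0 P error p) Pi).
Proof.
have p_le1 : p <= 1 by case/andP: hp.
have safe_error : ~~ connect (edge P) safe error by rewrite hsafe.
split; first exact: Theta_p_cause safe_error p_le1.
split; first exact: Theta_regular.
exact: Theta_minimal.
Qed.
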